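(* Let $(q_n)$ be the Fibonacci Quilt sequence. Then (1) $2q_n=q_{n+2}+q_{n-5}$ for all $n\ge7$; (2) $q_n+q_{n-2}=q_{n+1}+q_{n-5}$ for all $n\ge8$; (3) $q_n+q_{n-3}=q_{n+1}+q_{n-8}$ for all $n\ge10$.
   Context: Given an increasing sequence of positive integers $(q_i)_{i\ge1}$, an FQ-legal decomposition of an integer $m\ge0$ is an expression $m=q_{\ell_1}+q_{\ell_2}+\cdots+q_{\ell_t}$ ($t\ge0$, the empty sum representing $0$) with distinct indices $\ell_1>\ell_2>\cdots>\ell_t$ such that $|\ell_i-\ell_j|\notin\{1,3,4\}$ for all $i,j$, and $\{1,3\}\not\subset\{\ell_1,\dots,\ell_t\}$. The Fibonacci Quilt sequence is the increasing sequence of positive integers $(q_i)_{i\ge1}$ in which each $q_i$ is the smallest positive integer having no FQ-legal decomposition using only $q_1,\dots,q_{i-1}$. Its first terms are $1,2,3,4,5,7,9,12,16,21,28,37,49,\dots$. *)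

From mathcomp Require Import all_boot.
Set Implicit Arguments. Unset Strict Implicit. Unset Printing Implicit Defensive.

Fixpoint subs (s : seq nat) : seq (seq nat) :=
  match s with
  | [::] => [:: [::]]
  | x :: t => let r := subs t in [seq x :: L | L <- r] ++ r
  end.

Definition bad_gap (i j : nat) : bool :=
  let d := if i <= j then j - i else i - j in
  (d == 1) || (d == 3) || (d == 4).

Definition fq_legal (L : seq nat) : bool :=
  [&& uniq L,
      all (fun i => all (fun j => ~~ bad_gap i j) L) L &
      ~~ ((1 \in L) && (3 \in L))].

(* s is the list [q_1; ...; q_k]; q_l = nth 0 s l.-1. *)
Definition term (s : seq nat) (l : nat) : nat := nth 0 s l.-1.

Definition has_fq_decomp (s : seq nat) (m : nat) : bool :=
  has (fun L => fq_legal L && (sumn (map (term s) L) == m))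
      (subs (iota 1 (size s))).

(* The smallest positive integer with no FQ-legal decomposition using the
   terms in s (the search up to (sumn s).+1 always succeeds since a sum of
   distinct terms is at most sumn s). *)
Definition fq_next (s : seq nat) : nat :=
  (find (fun m => ~~ has_fq_decomp s m) (iota 1 (sumn s).+1)).+1.

Definition fq_prefix (n : nat) : seq nat :=
  iter n (fun s => rcons s (fq_next s)) [::].

(* The Fibonacci Quilt sequence, 1-indexed: fq n = q_n for n >= 1 (fq 0 = 0, unused). *)
Definition fq (n : nat) : nat := nth 0 (fq_prefix n) n.-1.

From mathcomp Require Import all_boot.
From mathcomp Require Import zify.

Set Implicit Arguments.
Unset Strict Implicit.
Unset Printing Implicit Defensive.

(* The sequence is 1, 2, 3, 4, 5 followed by q_n = q_(n-2) + q_(n-3), from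
   which the three identities follow linearly.  To identify the greedy
   sequence with this one, show that the integers with a legal decomposition
   into q_1, ..., q_k are exactly those below q_(k+1).  Legal indices are never
   consecutive, so a legal sum with indices up to k stays below q_(k+3); every
   m < q_(k+1) is reached greedily through q_(k+1) = q_k + q_(k-4); and
   q_(k+1) itself is not reached: removing the largest index (k or k - 1),
   and then possibly the next one, leaves a legal decomposition of some
   q_(j+1) with indices up to j < k. *)

Fixpoint quilt (n : nat) : nat :=
  match n with
  | 0 => 0 | 1 => 1 | 2 => 2 | 3 => 3 | 4 => 4
  | (n2.+1 as n3).+2 => quilt n3 + quilt n2
  end.

Lemma quiltE n : quilt (n + 5) = quilt (n + 3) + quilt (n + 2).
Proof. by rewrite !addnS addn0. Qed.

Lemma quilt_skip n : quilt (n + 7) = quilt (n + 6) + quilt (n + 2).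
Proof. rewrite !addnS addn0 /=; lia. Qed.

Lemma quilt_ltS n : quilt n < quilt n.+1.
Proof.
elim/ltn_ind: n => -[|[|[|[|[|m]]]]] IH //=.
by have := IH m.+2; have := IH m.+3; rewrite /=; lia.
Qed.

Lemma quilt_lt : {homo quilt : m n / m < n}.
Proof. exact: homo_ltn ltn_trans quilt_ltS. Qed.

Lemma quilt_le : {homo quilt : m n / m <= n}.
Proof. exact: homo_leq leq_trans (fun n => ltnW (quilt_ltS n)). Qed.

Lemma quilt_mul2 n : 2 * quilt (n + 7) = quilt (n + 9) + quilt (n + 2).
Proof. rewrite !addnS addn0 /=; lia. Qed.

Lemma quilt_add_sub2 n : quilt (n + 8) + quilt (n + 6) = quilt (n + 9) + quilt (n + 3).
Proof. rewrite !addnS addn0 /=; lia. Qed.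

Lemma quilt_add_sub3 n : quilt (n + 10) + quilt (n + 7) = quilt (n + 11) + quilt (n + 2).
Proof. rewrite !addnS addn0 /=; lia. Qed.

Lemma quilt_skip_sub k : 6 <= k -> quilt k.+1 = quilt k + quilt (k - 4).
Proof.
move=> k6; have [m ->] : exists m, k = m + 6 by exists (k - 6); lia.
by rewrite -addnS quilt_skip; congr (_ + quilt _); lia.
Qed.

Lemma quilt_succ_le_double n : 0 < n -> quilt n.+1 <= 2 * quilt n.
Proof.
move=> n0; case: (ltnP n 6) => [|n6]; first by case: n n0 => [|[|[|[|[|[|]]]]]].
have [m ->] : exists m, n = m + 6 by exists (n - 6); lia.
by rewrite -addnS quilt_skip mul2n -addnn leq_add2l quilt_le // leq_add2l.
Qed.

Lemma iotaSr m n : iota m n.+1 = rcons (iota m n) (m + n).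
Proof. by rewrite -[n.+1]addn1 iotaD cats1. Qed.

Lemma quilt_succ_le_sum n : quilt n.+1 <= sumn (map quilt (iota 1 n)) + 1.
Proof.
elim: n => [|n IH] //.
rewrite iotaSr map_rcons sumn_rcons add1n.
by have := @quilt_succ_le_double n.+1 isT; lia.
Qed.

Lemma sumn_map_rem (f : nat -> nat) x L :
  x \in L -> sumn (map f L) = f x + sumn (map f (rem x L)).
Proof. by move=> xL; rewrite (perm_sumn (perm_map f (perm_to_rem xL))). Qed.

Lemma fq_legalP L :
  reflect [/\ uniq L, {in L &, forall i j, ~~ bad_gap i j} & ~~ ((1 \in L) && (3 \in L))]
          (fq_legal L).
Proof.
apply: (iffP and3P) => -[uL gapL L13]; split=> //.
- by move=> i j iL jL; exact: (allP (allP gapL i iL)).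
- by apply/allP=> i iL; apply/allP=> j jL; exact: gapL.
Qed.

Lemma fq_legal_rem x L : fq_legal L -> fq_legal (rem x L).
Proof.
case/fq_legalP=> uL gapL L13; apply/fq_legalP; split; first exact: rem_uniq.
- by move=> i j /mem_rem iL /mem_rem jL; exact: gapL.
- by apply: contra L13 => /andP[/mem_rem -> /mem_rem ->].
Qed.

Lemma bad_gap_lt i k : i < k -> ~~ bad_gap i k -> i + 2 = k \/ i + 5 <= k.
Proof. by rewrite /bad_gap; case: (leqP i k) => ? ? /norP[/norP[? ?] ?]; lia. Qed.

Definition in_range (k : nat) (L : seq nat) : bool := all (fun i => 0 < i <= k) L.

Lemma in_rangeP {k L} : reflect {in L, forall i, 0 < i <= k} (in_range k L).
Proof. exact: allP. Qed.

Lemma in_range_widen k k' L : k <= k' -> in_range k L -> in_range k' L.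
Proof. by move=> kk' /in_rangeP rangeL; apply/in_rangeP=> i /rangeL; lia. Qed.

Lemma in_range_notin k L : in_range k L -> k \notin L -> in_range k.-1 L.
Proof.
move=> /in_rangeP rangeL kL; apply/in_rangeP=> i iL.
have : i != k by apply: contraNneq kL => <-.
by have := rangeL i iL; lia.
Qed.

Lemma bad_gap_far i j : i + 5 <= j -> ~~ bad_gap i j /\ ~~ bad_gap j i.
Proof. by rewrite /bad_gap => ij; split; case: leqP; lia. Qed.

Lemma fq_legal_cons k L : fq_legal L -> in_range (k - 5) L -> fq_legal (k :: L).
Proof.
case/fq_legalP=> uL gapL L13 /in_rangeP rangeL.
have farL i : i \in L -> 0 < i /\ i + 5 <= k by move/rangeL; lia.
apply/fq_legalP; split.
- by rewrite /= uL andbT; apply/negP => /farL; lia.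
- move=> i j; rewrite !in_cons => /predU1P[-> | iL] /predU1P[-> | jL].
  + by rewrite /bad_gap leqnn subnn.
  + by have [_ /bad_gap_far[]] := farL j jL.
  + by have [_ /bad_gap_far[]] := farL i iL.
  + exact: gapL.
- rewrite !in_cons; apply/negP => /andP[/predU1P[k1|L1] /predU1P[k3|L3]].
  + by rewrite -k3 in k1.
  + by have := farL 3 L3; lia.
  + by have := farL 1 L1; lia.
  + by move: L13; rewrite L1 L3.
Qed.

Section RemoveTop.

Variables (k : nat) (L : seq nat).
Hypotheses (legalL : fq_legal L) (rangeL : in_range k L) (kL : k \in L).

Lemma mem_rem_top i : i \in rem k L -> [/\ i \in L, 0 < i, i < k & ~~ bad_gap i k].
Proof.
case/fq_legalP: legalL => uL gapL _; rewrite mem_rem_uniq // => /andP[ik iL].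
by have := in_rangeP rangeL i iL; split=> //; [lia | lia | exact: gapL].
Qed.

Lemma in_range_rem_top : in_range (k - 2) (rem k L).
Proof.
apply/in_rangeP=> i /mem_rem_top[_ i0 ik /(bad_gap_lt ik)]; lia.
Qed.

Lemma in_range_rem_top_skip : k - 2 \notin L -> in_range (k - 5) (rem k L).
Proof.
move=> k2L; apply/in_rangeP=> i /mem_rem_top[iL i0 ik /(bad_gap_lt ik)].
have : i != k - 2 by apply: contraNneq k2L => <-.
lia.
Qed.

Lemma in_range_rem_top2 : k - 2 \in L -> in_range (k - 7) (rem (k - 2) (rem k L)).
Proof.
case/fq_legalP: legalL => uL gapL _ k2L.
have k2pos := in_rangeP rangeL _ k2L.
apply/in_rangeP=> j; rewrite mem_rem_uniq ?rem_uniq // => /andP[jk2].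
case/mem_rem_top=> jL j0 jk /(bad_gap_lt jk) jfar.
have jk2' : j < k - 2 by lia.
by have := bad_gap_lt jk2' (gapL _ _ jL k2L); lia.
Qed.

End RemoveTop.

(* Truncated subtraction makes [k - 2 + 3] differ from [k + 1] for [k <= 1]; the bound still holds there. *)
Lemma quilt_add_sub2_le k : quilt k + quilt (k - 2 + 3) <= quilt (k + 3).
Proof.
case: k => [|[|j]] //.
have -> : j.+2 - 2 + 3 = j + 3 by lia.
by rewrite -addn2 -addnA quiltE addnC.
Qed.

(* Only the absence of consecutive indices matters here. *)
Lemma quilt_sum_lt k L :
  fq_legal L -> in_range k L -> sumn (map quilt L) < quilt (k + 3).
Proof.
elim/ltn_ind: k L => k IH L legalL rangeL.
have [kL|kL] := boolP (k \in L); last first.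
  case: k IH rangeL kL => [|k] IH rangeL kL.
    by case: L rangeL {IH legalL kL} => // i L /andP[/andP[]]; lia.
  apply: leq_trans (IH k (ltnSn k) L legalL (in_range_notin rangeL kL)) _.
  by apply: quilt_le; rewrite leq_add2r.
rewrite (sumn_map_rem _ kL); apply: leq_trans (quilt_add_sub2_le k).
rewrite -addnS leq_add2l.
apply: IH (fq_legal_rem _ legalL) (in_range_rem_top legalL rangeL kL).
by have /andP[k0 _] := in_rangeP rangeL k kL; lia.
Qed.

Definition decomposable (k m : nat) : Prop :=
  exists L, [/\ fq_legal L, in_range k L & sumn (map quilt L) = m].

Lemma decomposable_widen k k' m : k <= k' -> decomposable k m -> decomposable k' m.
Proof.
by move=> kk' [L [legalL rangeL sumL]]; exists L; split=> //; exact: in_range_widen rangeL.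
Qed.

Lemma mem_subs L s : (L \in subs s) = subseq L s.
Proof.
elim: s L => [|x s IH] [|y L] //=; rewrite mem_cat ?IH ?sub0seq ?orbT //.
have [->|yx] := eqVneq y x.
  apply/orP/idP => [[/mapP[L' L's [->]]|]|Ls]; rewrite -?IH //.
  - by rewrite !IH; exact: subseq_trans (subseq_cons L x).
  - by left; apply/mapP; exists L; rewrite ?IH.
suff -> : (y :: L \in map (cons x) (subs s)) = false by [].
by apply/mapP=> -[L' _ [yx']]; rewrite yx' eqxx in yx.
Qed.

Lemma fq_legal_perm L L' : perm_eq L L' -> fq_legal L = fq_legal L'.
Proof.
move=> pLL'; have memL := perm_mem pLL'.
apply/fq_legalP/fq_legalP => -[u g c]; split.
- by rewrite -(perm_uniq pLL').
- by move=> i j; rewrite -!memL; exact: g.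
- by rewrite -!memL.
- by rewrite (perm_uniq pLL').
- by move=> i j; rewrite !memL; exact: g.
- by rewrite !memL.
Qed.

Lemma term_quilt k i : 0 < i <= k -> term (map quilt (iota 1 k)) i = quilt i.
Proof.
move=> /andP[i0 ik]; rewrite /term (nth_map 0) ?size_iota; last lia.
by rewrite nth_iota; [congr quilt | ]; lia.
Qed.

Lemma has_fq_decompP k m :
  reflect (decomposable k m) (has_fq_decomp (map quilt (iota 1 k)) m).
Proof.
have termE L : in_range k L -> map (term (map quilt (iota 1 k))) L = map quilt L.
  by move=> /in_rangeP rangeL; apply/eq_in_map=> i /rangeL; exact: term_quilt.
rewrite /has_fq_decomp size_map size_iota.
apply: (iffP hasP) => [[L] | [L [legalL rangeL <-]]].
  rewrite mem_subs => subL /andP[legalL /eqP sumL].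
  have rangeL : in_range k L.
    by apply/in_rangeP=> i /(mem_subseq subL); rewrite mem_iota; lia.
  by exists L; rewrite -termE.
(* [subs] only enumerates increasing lists, so L is replaced by its sorted copy. *)
set L' := [seq i <- iota 1 k | i \in L].
have pL'L : perm_eq L' L.
  apply: uniq_perm; [exact/filter_uniq/iota_uniq | by case/fq_legalP: legalL |].
  move=> i; rewrite mem_filter mem_iota; case iL: (i \in L) => //=.
  by have := in_rangeP rangeL i iL; lia.
have rangeL' : in_range k L' by apply/in_rangeP=> x; rewrite mem_filter mem_iota; lia.
exists L'; first by rewrite mem_subs filter_subseq.
rewrite (fq_legal_perm pL'L) legalL termE //.
by rewrite (perm_sumn (perm_map quilt pL'L)) eqxx.
Qed.

Lemma decomposable_lt k m : m < quilt k.+1 -> decomposable k m.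
Proof.
elim/ltn_ind: k m => k IH m mk.
have [k6|k6] := ltnP k 6.
  have base : all (fun k => all (has_fq_decomp (map quilt (iota 1 k)))
                                (iota 0 (quilt k.+1))) (iota 0 6) by vm_compute.
  apply/has_fq_decompP; move/allP: base => /(_ k); rewrite mem_iota => /(_ k6).
  by move/allP => /(_ m); rewrite mem_iota; apply.
have [mk'|km] := ltnP m (quilt k).
  apply: decomposable_widen (leq_pred k) (IH k.-1 _ m _); first lia.
  by rewrite prednK // (leq_trans _ k6).
have [L [legalL rangeL sumL]] : decomposable (k - 5) (m - quilt k).
  apply: IH; first lia.
  have -> : (k - 5).+1 = k - 4 by lia.
  by move: mk; rewrite quilt_skip_sub //; lia.
exists (k :: L); split; first exact: fq_legal_cons.
- by rewrite /= leqnn (in_range_widen _ rangeL) ?leq_subr ?andbT // (leq_trans _ k6).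
- by rewrite /= sumL; lia.
Qed.

Section NextNotDecomposable.

Variable n : nat.
Hypotheses (n9 : 9 <= n) (IH : forall j, j < n -> ~ decomposable j (quilt j.+1)).
Variable L : seq nat.
Hypotheses (legalL : fq_legal L) (rangeL : in_range n L).
Hypothesis sumL : sumn (map quilt L) = quilt n.+1.

Lemma top_notin_next_decomposition : n \notin L.
Proof.
apply/negP=> nL; move: sumL; rewrite (sumn_map_rem _ nL) quilt_skip_sub ?(leq_trans _ n9) //.
move/addnI => sumR.
have [n2L|n2L] := boolP (n - 2 \in L).
  have n2R : n - 2 \in rem n L by apply: rem_mem n2L; lia.
  move: sumR; rewrite (sumn_map_rem _ n2R).
  by have := @quilt_lt (n - 4) (n - 2); lia.
apply: IH (n - 5) _ _; first lia.
exists (rem n L); split; [exact: fq_legal_rem | exact: in_range_rem_top_skip |].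
by rewrite sumR -subSn ?subSS // (leq_trans _ n9).
Qed.

Lemma in_range_pred_next_decomposition : in_range (n - 1) L.
Proof. by rewrite subn1; exact: in_range_notin rangeL top_notin_next_decomposition. Qed.

Lemma pred_notin_next_decomposition : n - 1 \notin L.
Proof.
apply/negP=> n1L; have rangeL1 := in_range_pred_next_decomposition.
have n3E : n - 1 - 2 = n - 3 by lia.
have sumR : sumn (map quilt (rem (n - 1) L)) = quilt (n - 2).
  move: sumL; rewrite (sumn_map_rem _ n1L).
  have := quiltE (n - 4).
  have [-> -> ->] : [/\ n - 4 + 5 = n.+1, n - 4 + 3 = n - 1 & n - 4 + 2 = n - 2] by split; lia.
  lia.
have [n3L|n3L] := boolP (n - 3 \in L).
  have n3R : n - 3 \in rem (n - 1) L by apply: rem_mem n3L; lia.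
  apply: IH (n - 8) _ _; first lia.
  exists (rem (n - 3) (rem (n - 1) L)); split.
  - exact/fq_legal_rem/fq_legal_rem.
  - have := in_range_rem_top2 legalL rangeL1 n1L; rewrite n3E => /(_ n3L).
    by apply: in_range_widen; lia.
  - have -> : (n - 8).+1 = n - 7 by lia.
    have := @quilt_skip_sub (n - 3).
    have [-> ->] : (n - 3).+1 = n - 2 /\ n - 3 - 4 = n - 7 by split; lia.
    by move: sumR; rewrite (sumn_map_rem _ n3R); lia.
have := quilt_sum_lt (fq_legal_rem (n - 1) legalL)
          (in_range_rem_top_skip legalL rangeL1 n1L _).
have -> : n - 1 - 5 + 3 = n - 3 by lia.
rewrite n3E sumR => /(_ n3L).
by have := @quilt_lt (n - 3) (n - 2); lia.
Qed.

Lemma not_next_decomposition : False.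
Proof.
have := in_range_notin in_range_pred_next_decomposition pred_notin_next_decomposition.
move/(quilt_sum_lt legalL); rewrite sumL.
have -> : (n - 1).-1 + 3 = n.+1 by lia.
by rewrite ltnn.
Qed.

End NextNotDecomposable.

Lemma quilt_not_decomposable k : ~ decomposable k (quilt k.+1).
Proof.
elim/ltn_ind: k => k IH decomp.
have [k9|k9] := ltnP k 9.
  have base : all (fun k => ~~ has_fq_decomp (map quilt (iota 1 k)) (quilt k.+1))
                  (iota 0 9) by vm_compute.
  move/allP: base => /(_ k); rewrite mem_iota => /(_ k9) /negP; apply.
  exact/has_fq_decompP.
case: decomp => L [legalL rangeL sumL].
exact: (not_next_decomposition k9 IH legalL rangeL sumL).
Qed.

Lemma fq_nextE s m : 0 < m <= (sumn s).+1 ->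
  (forall i, 0 < i < m -> has_fq_decomp s i) -> ~~ has_fq_decomp s m -> fq_next s = m.
Proof.
move=> /andP[m0 ms] below notm; rewrite /fq_next.
set p := fun i => ~~ has_fq_decomp s i; set K := (sumn s).+1.
have hasp : has p (iota 1 K) by apply/hasP; exists m; rewrite ?mem_iota //; lia.
have jK : find p (iota 1 K) < K by rewrite -[K in _ < K](size_iota 1) -has_find.
have := nth_find 0 hasp; have := @before_find _ 0 p (iota 1 K).
move: jK; set j := find p _ => jK before atj.
rewrite nth_iota // in atj.
case: (ltngtP j.+1 m) => [jm|mj|//].
  by move: atj; rewrite /p below //; lia.
have /before : m.-1 < j by lia.
rewrite nth_iota; last lia.
by rewrite /p add1n prednK // notm.
Qed.

Lemma fq_next_quilt n : fq_next (map quilt (iota 1 n)) = quilt n.+1.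
Proof.
have q0 : 0 < quilt n.+1 by exact: (@quilt_lt 0).
apply: fq_nextE.
- by rewrite q0 andTb; have := quilt_succ_le_sum n; lia.
- by move=> i /andP[_ iq]; apply/has_fq_decompP/decomposable_lt.
- by apply/has_fq_decompP/quilt_not_decomposable.
Qed.

Lemma fq_prefix_quilt n : fq_prefix n = map quilt (iota 1 n).
Proof.
elim: n => [|n IH] //.
by rewrite /fq_prefix iterS -/(fq_prefix n) IH fq_next_quilt iotaSr add1n map_rcons.
Qed.

Lemma fq_quilt n : fq n = quilt n.
Proof.
by case: n => [|n] //; rewrite /fq fq_prefix_quilt; apply: term_quilt; rewrite leqnn.
Qed.

Theorem mainTheorem17 :
  (forall n : nat, 7 <= n -> 2 * fq n = fq (n + 2) + fq (n - 5)) /\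
  (forall n : nat, 8 <= n -> fq n + fq (n - 2) = fq (n + 1) + fq (n - 5)) /\
  (forall n : nat, 10 <= n -> fq n + fq (n - 3) = fq (n + 1) + fq (n - 8)).
Proof.
split; [|split] => n n_ge; rewrite !fq_quilt.
- have [m ->] : exists m, n = m + 7 by exists (n - 7); lia.
  have [-> ->] : m + 7 + 2 = m + 9 /\ m + 7 - 5 = m + 2 by split; lia.
  exact: quilt_mul2.
- have [m ->] : exists m, n = m + 8 by exists (n - 8); lia.
  have [-> -> ->] : [/\ m + 8 - 2 = m + 6, m + 8 + 1 = m + 9 & m + 8 - 5 = m + 3].
    by split; lia.
  exact: quilt_add_sub2.
- have [m ->] : exists m, n = m + 10 by exists (n - 10); lia.
  have [-> -> ->] : [/\ m + 10 - 3 = m + 7, m + 10 + 1 = m + 11 & m + 10 - 8 = m + 2].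
    by split; lia.
  exact: quilt_add_sub3.
Qed.
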